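(* In the single-item all-pay auction with budgets described in the context, let $L=\min\{B_1,B_2,v_1,v_2\}$. Then in any Nash equilibrium $(F_1,F_2)$ we have $\overline{x}_1=\overline{x}_2=L$.
   Context: Single-item all-pay auction with budgets. There are two players $i\in\{1,2\}$; $-i$ denotes the opponent of $i$. Player $i$ has budget $B_i\ge 0$ and valuation $v_i>0$ for a single item. A pure strategy of player $i$ is a bid $x_i\in[0,B_i]$; a mixed strategy is a probability distribution on $[0,B_i]$, described by its cumulative distribution function $F_i$. The player with the higher bid wins the item. Tie-breaking: if $x_1=x_2=\min\{B_1,B_2,v_1,v_2\}$ and $\min\{B_i,v_i\}>\min\{B_{-i},v_{-i}\}$ for some $i$, then player $i$ wins; in all other ties each player wins with probability $\frac12$. Player $i$'s utility is $v_i-x_i$ if he wins and $-x_i$ if he loses. A Nash equilibrium is a pair $(F_1,F_2)$ such that each $F_i$ maximizes player $i$'s expected utility against $F_{-i}$ over all mixed strategies on $[0,B_i]$. $Supp(F_i)$ is the support of $F_i$, $\overline{x}_i=\sup Supp(F_i)$ and $\underline{x}_i=\inf Supp(F_i)$. *)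

From HB Require Import structures.
From mathcomp Require Import all_boot all_order all_algebra.
From mathcomp Require Import all_classical all_reals all_analysis.
Set Implicit Arguments. Unset Strict Implicit. Unset Printing Implicit Defensive.
Import Order.TTheory GRing.Theory Num.Theory.
Local Open Scope classical_set_scope.
Local Open Scope ring_scope.

Section AllPay.
Variable R : realType.

Definition Lval (B1 B2 v1 v2 : R) : R :=
  Num.min (Num.min B1 B2) (Num.min v1 v2).

(* Realized (tie-expected) payoff of a player with budget B, valuation v,
   own bid x, against an opponent with budget B', valuation v', bid y.
   Ties: if x = y = L and min{B,v} > min{B',v'} this player wins;
   if x = y = L and min{B',v'} > min{B,v} the opponent wins;
   in all other ties each wins with probability 1/2 (expected payoff). *)
Definition payoff (B v B' v' : R) (x y : R) : R :=
  if y < x then v - x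
  else if x < y then - x
  else
    if (x == Lval B B' v v') && (Num.min B' v' < Num.min B v) then v - x
    else if (x == Lval B B' v v') && (Num.min B v < Num.min B' v') then - x
    else v / 2 - x.

(* A mixed strategy on [0, B]: a probability measure on R giving full mass to [0,B]. *)
Definition mixed_on (B : R) (P : probability R R) : Prop :=
  P `[0, B]%classic = 1%E.

Definition exp_util (B v B' v' : R) (P Q : probability R R) : \bar R :=
  (\int[P]_x (\int[Q]_y (payoff B v B' v' x y)%:E))%E.

Definition nash_eq (B1 B2 v1 v2 : R) (F1 F2 : probability R R) : Prop :=
  [/\ mixed_on B1 F1, mixed_on B2 F2,
      (forall G : probability R R, mixed_on B1 G ->
         (exp_util B1 v1 B2 v2 G F2 <= exp_util B1 v1 B2 v2 F1 F2)%E) &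
      (forall G : probability R R, mixed_on B2 G ->
         (exp_util B2 v2 B1 v1 G F1 <= exp_util B2 v2 B1 v1 F2 F1)%E)].

Definition supp (P : probability R R) : set R :=
  [set x : R | forall e : R, 0 < e ->
     (0%E < P [set y : R | (x - e < y < x + e)%R])%E].

End AllPay.

From HB Require Import structures.
From mathcomp Require Import all_boot all_order all_algebra.
From mathcomp Require Import all_classical all_reals all_analysis.
From mathcomp Require Import measurable_realfun.
From mathcomp Require Import ring lra.
Import Order.TTheory GRing.Theory Num.Theory.
Local Open Scope classical_set_scope.
Local Open Scope ring_scope.

(* Write t_i for the top of the support of F_i and U_i for player i's
   equilibrium payoff. Every bid in [0, B_i] earns at most U_i against
   F_{-i}, so a set of bids that earns less than some c < U_i has
   F_i-probability zero. A bid above the opponent's top wins surely, so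
   neither top can exceed the other's: t_1 = t_2 =: t. Bidding above v_i
   earns less than bidding 0, hence t <= L. If t < L, each player secures
   U_i > 0 by bidding in (t, L). A bid below b earns at most
   v_i F_{-i}(-oo, b), so both supports start at the same point s and, by
   continuity, each F_i has an atom there of mass at least U_{-i} / v_{-i}.
   But s < L, so a tie at s is split evenly, and moving the atom slightly
   above s wins the opponent's whole atom at a negligible cost. *)

Section interval_masses.
Context {R : realType} (P : probability R R).

Definition pr (A : set R) : R := fine (P A).

Lemma prE A : measurable A -> P A = (pr A)%:E.
Proof. by move=> mA; rewrite /pr fineK // fin_num_measure. Qed.

Lemma pr_ge0 A : 0 <= pr A.
Proof. exact/fine_ge0/measure_ge0. Qed.

Lemma pr_le A B : measurable A -> measurable B -> A `<=` B -> pr A <= pr B.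
Proof.
by move=> mA mB AB; rewrite -lee_fin -!prE //; apply: le_measure; rewrite ?inE.
Qed.

Lemma prU A B : measurable A -> measurable B -> A `&` B = set0 ->
  pr (A `|` B) = pr A + pr B.
Proof.
move=> mA mB AB; apply: EFin_inj.
by rewrite EFinD -!prE //; [exact: measureU | exact: measurableU].
Qed.

Lemma prC A : measurable A -> pr (~` A) = 1 - pr A.
Proof.
move=> mA; apply: EFin_inj.
by rewrite EFinB -!prE //; [exact: probability_setC | exact: measurableC].
Qed.

Lemma integrable_indicZ D c A : measurable D -> measurable A ->
  P.-integrable D (fun y => (c * \1_A y)%:E).
Proof.
move=> mD mA; under eq_fun do rewrite EFinM.
apply: integrableZl => //.
by apply: (integrableS measurableT); last exact: integrable_indic.
Qed.

Lemma integral_indicZ D c A : measurable D -> measurable A ->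
  (\int[P]_(y in D) (c * \1_A y)%:E = (c * pr (A `&` D))%:E)%E.
Proof.
move=> mD mA; under eq_integral do rewrite EFinM.
rewrite integralZl //; last first.
  by apply: (integrableS measurableT); last exact: integrable_indic.
rewrite integral_indic // EFinM /pr fineK // fin_num_measure //.
exact: measurableI.
Qed.

Definition mass_below (x : R) : R := pr `]-oo, x[.
Definition mass_above (x : R) : R := pr `]x, +oo[.

Lemma pr_itvcy x : pr `[x, +oo[ = 1 - mass_below x.
Proof. by rewrite -prC // setCitvl. Qed.

Lemma pr_itvNyc x : pr `]-oo, x] = 1 - mass_above x.
Proof. by rewrite -prC // setCitvr. Qed.

Lemma pr_set1 x : pr [set x] = 1 - mass_below x - mass_above x.
Proof.
have := pr_itvNyc x; rewrite -(@setUitv1 _ _ _ x true) // prU //.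
  by rewrite /mass_below; lra.
by apply/seteqP; split => y // [] /=; rewrite in_itv /= => + yx; rewrite yx ltxx.
Qed.

Lemma mass_below_nd : {homo mass_below : x y / x <= y}.
Proof.
move=> x y xy; apply: pr_le => // z /=.
by rewrite !in_itv /= => /lt_le_trans; apply.
Qed.

Lemma mass_above_ni : {homo mass_above : x y / x <= y >-> y <= x}.
Proof.
move=> x y xy; apply: pr_le => // z /=.
by rewrite !in_itv /= !andbT => /(le_lt_trans xy).
Qed.

Lemma pr_bigcup_le (A : nat -> set R) k :
  (forall n, measurable (A n)) -> nondecreasing_seq A ->
  (forall n, pr (A n) <= k) -> pr (\bigcup_n A n) <= k.
Proof.
move=> mA ndA Ak.
have mU : measurable (\bigcup_n A n) by exact: bigcupT_measurable.
have PA := @nondecreasing_cvg_mu _ _ _ P A mA mU ndA.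
rewrite -lee_fin -prE // -(cvg_lim _ PA) //.
apply: lime_le; first exact: cvgP PA.
by near=> n; rewrite /= prE // lee_fin.
Unshelve. all: by end_near.
Qed.

Let invS_ni :
  {homo (fun n : nat => (n.+1%:R : R)^-1) : n m / (n <= m)%N >-> m <= n}.
Proof. by move=> n m nm; rewrite lef_pV2 ?posrE ?ltr0Sn // ler_nat ltnS. Qed.

Lemma mass_below_le x k :
  (forall b, b < x -> mass_below b <= k) -> mass_below x <= k.
Proof.
move=> Pk; rewrite /mass_below.
have -> : `]-oo, x[%classic = \bigcup_n `]-oo, x - n.+1%:R^-1[%classic.
  apply/seteqP; split => y /=; rewrite in_itv /=.
    by move=> /ltr_add_invr[n yn]; exists n => //=; rewrite in_itv /= ltrBrDr.
  case=> n _ /=; rewrite in_itv /= => /lt_le_trans; apply.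
  by rewrite gerBl invr_ge0.
apply: pr_bigcup_le => // [n m nm|n]; first apply/subsetPset => y.
  by rewrite /= !in_itv /= => /lt_le_trans; apply; rewrite lerB // invS_ni.
by apply: Pk; rewrite gtrBl invr_gt0.
Qed.

Lemma mass_above_le x k :
  (forall b, x < b -> pr `[b, +oo[ <= k) -> mass_above x <= k.
Proof.
move=> Pk; rewrite /mass_above itvoyEbigcup.
apply: pr_bigcup_le => // [n m nm|n]; first apply/subsetPset => y.
  by rewrite /= !in_itv /= !andbT; apply: le_trans; rewrite lerD2l invS_ni.
by apply: Pk; rewrite ltrDl invr_gt0.
Qed.

End interval_masses.

Definition upper_end {R : realType} (P : probability R R) : R :=
  inf [set a | mass_above P a = 0].
Definition lower_end {R : realType} (P : probability R R) : R :=
  sup [set a | mass_below P a = 0].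

Section mixed_strategy.
Context {R : realType} {B : R} {P : probability R R}.
Hypothesis PB : mixed_on B P.

Lemma pr_mixed : pr P `[0, B] = 1.
Proof. by rewrite /pr PB. Qed.

Lemma pr_mixed_out S : measurable S -> S `&` `[0, B] = set0 -> pr P S = 0.
Proof.
move=> mS S0B; apply/le_anti; rewrite pr_ge0 andbT.
have : pr P S <= pr P (~` `[0, B]).
  apply: pr_le => // [|y Sy yB]; first exact: measurableC.
  by suff : (S `&` `[0, B]) y by rewrite S0B.
by rewrite prC // pr_mixed subrr.
Qed.

Lemma pr_setI_mixed S : measurable S -> pr P (S `&` `[0, B]) = pr P S.
Proof.
move=> mS; rewrite -[in RHS](setUIDK S `[0, B]) prU //; last 3 first.
- exact: measurableI.
- exact: measurableD.
- by rewrite setDE setIACA setICr setI0.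
rewrite [X in _ + X](pr_mixed_out _) ?addr0 //; first exact: measurableD.
by rewrite setDE -setIA setICl setI0.
Qed.

Let mass_above_B : mass_above P B = 0.
Proof.
apply: pr_mixed_out => //; apply/seteqP; split => // y [] /=.
by rewrite !in_itv /= andbT => By /andP[_ yB]; lra.
Qed.

Let mass_above_lbound : lbound [set a | mass_above P a = 0] 0.
Proof.
move=> a /= Pa; rewrite leNgt; apply/negP => a_lt0.
have : pr P `[0, B] <= mass_above P a.
  by apply: pr_le => // y /=; rewrite !in_itv /= andbT => /andP[y_ge0 _]; lra.
by rewrite Pa pr_mixed; lra.
Qed.

Lemma upper_end_itv : 0 <= upper_end P <= B.
Proof.
apply/andP; split; first by apply: lb_le_inf mass_above_lbound; exists B.
by apply: ge_inf mass_above_B; exists 0.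
Qed.

Lemma pr_itvcy_gt_upper_end x : upper_end P < x -> pr P `[x, +oo[ = 0.
Proof.
move=> /inf_lt[|a /= Pa ax]; first by exists B.
apply/le_anti; rewrite pr_ge0 andbT -Pa.
by apply: pr_le => // y /=; rewrite !in_itv /= !andbT => /(lt_le_trans ax).
Qed.

Lemma mass_above_lt_upper_end a : a < upper_end P -> 0 < mass_above P a.
Proof.
move=> a_lt; rewrite lt_neqAle pr_ge0 andbT eq_sym; apply/negP => /eqP Pa.
have : upper_end P <= a by apply: ge_inf Pa; exists 0.
by rewrite leNgt a_lt.
Qed.

Let supp_ball (x e : R) :
  [set y | x - e < y < x + e] = `]x - e, x + e[%classic.
Proof. by apply/seteqP; split => y /=; rewrite in_itv. Qed.

Lemma sup_supp : sup (supp P) = upper_end P.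
Proof.
set t := upper_end P; have /andP[t_ge0 _] := upper_end_itv.
have supp_t : supp P t.
  move=> e e_gt0; rewrite supp_ball prE // lte_fin lt_neqAle pr_ge0 andbT.
  apply/eqP => ball0; have := mass_above_lt_upper_end (t - e).
  have -> : mass_above P (t - e) = pr P `]t - e, t + e[ + pr P `[t + e, +oo[.
    rewrite /mass_above -prU //; last first.
      by apply/seteqP; split => y // [] /=; rewrite !in_itv /= andbT; lra.
    congr pr; apply/seteqP; split => y /=; rewrite !in_itv /= ?andbT.
      move=> ty; have [y_lt|y_ge] := ltP y (t + e); last by right.
      by left; apply/andP.
    by case=> [/andP[] | ]; lra.
  by rewrite -ball0 pr_itvcy_gt_upper_end; lra.
have ub_t : ubound (supp P) t.
  move=> y supp_y; rewrite leNgt; apply/negP => ty.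
  have e_gt0 : 0 < (y - t) / 2 by lra.
  have := supp_y _ e_gt0; rewrite supp_ball prE // lte_fin.
  have -> : pr P `]y - (y - t) / 2, y + (y - t) / 2[ = 0.
    apply/le_anti; rewrite pr_ge0 andbT -(pr_itvcy_gt_upper_end ((y + t) / 2)).
      by apply: pr_le => // z /=; rewrite !in_itv /= andbT; lra.
    by rewrite /t; lra.
  by rewrite ltxx.
apply/le_anti/andP; split; first by apply: ge_sup ub_t; exists t.
by apply: ub_le_sup supp_t; exists t.
Qed.

Let mass_below_0 : mass_below P 0 = 0.
Proof.
apply: pr_mixed_out => //; apply/seteqP; split => // y [] /=.
by rewrite !in_itv /= => y0 /andP[y_ge0 _]; lra.
Qed.

Let mass_below_ubound : ubound [set a | mass_below P a = 0] B.
Proof.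
move=> a /= Pa; rewrite leNgt; apply/negP => Ba.
have : pr P `[0, B] <= mass_below P a.
  by apply: pr_le => // y /=; rewrite !in_itv /= => /andP[_ yB]; lra.
by rewrite Pa pr_mixed; lra.
Qed.

Lemma lower_end_ge0 : 0 <= lower_end P.
Proof. by apply: ub_le_sup mass_below_0; exists B. Qed.

Lemma mass_below_lower_end : mass_below P (lower_end P) = 0.
Proof.
apply/le_anti; rewrite pr_ge0 andbT; apply: mass_below_le => b.
move=> /sup_gt[|a /= Pa ba]; first by exists 0.
by rewrite -Pa mass_below_nd // ltW.
Qed.

Lemma mass_below_gt_lower_end b : lower_end P < b -> 0 < mass_below P b.
Proof.
move=> b_gt; rewrite lt_neqAle pr_ge0 andbT eq_sym; apply/negP => /eqP Pb.
have : b <= lower_end P by apply: ub_le_sup Pb; exists B.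
by rewrite leNgt b_gt.
Qed.

Lemma lower_end_le_upper_end : lower_end P <= upper_end P.
Proof.
rewrite leNgt; apply/negP => ul; set x := (upper_end P + lower_end P) / 2.
have : pr P `[x, +oo[ = 0 by apply: pr_itvcy_gt_upper_end; rewrite /x; lra.
have : mass_below P x <= mass_below P (lower_end P).
  by apply: mass_below_nd; rewrite /x; lra.
by rewrite mass_below_lower_end pr_itvcy; lra.
Qed.

End mixed_strategy.

Section bid_utility.
Context {R : realType} (B v B' v' : R) (Q : probability R R).

Definition tie_payoff (x : R) : R :=
  if (x == Lval B B' v v') && (Num.min B' v' < Num.min B v) then v - x
  else if (x == Lval B B' v v') && (Num.min B v < Num.min B' v') then - x
  else v / 2 - x.

Definition bid_util (x : R) : R :=
  (v - x) * mass_below Q x - x * mass_above Q x + tie_payoff x * pr Q [set x].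

Lemma payoff_indicE x y : payoff B v B' v' x y =
  (v - x) * \1_`]-oo, x[ y - x * \1_`]x, +oo[ y + tie_payoff x * \1_[set x] y.
Proof.
rewrite /payoff /tie_payoff !indicE !mem_setE in_set1 !in_itv /= andbT.
have [yx|xy|<-] := ltgtP y x;
  by rewrite /= ?mulr1 ?mulr0 ?subr0 ?addr0 ?add0r ?sub0r.
Qed.

Lemma integral_payoff x :
  (\int[Q]_y (payoff B v B' v' x y)%:E = (bid_util x)%:E)%E.
Proof.
under eq_integral do rewrite payoff_indicE -mulNr !EFinD.
rewrite integralD //; last 2 first.
- by apply: integrableD => //; exact: integrable_indicZ.
- exact: integrable_indicZ.
rewrite integralD //; try exact: integrable_indicZ.
by rewrite !integral_indicZ // !setIT -!EFinD /bid_util mulNr.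
Qed.

Lemma tie_payoffE : tie_payoff = (fun x => v / 2 - x) \+
  (fun x => (if Num.min B' v' < Num.min B v then v / 2
             else if Num.min B v < Num.min B' v' then - (v / 2) else 0) *
            \1_[set Lval B B' v v'] x).
Proof.
apply/funext => x /=; rewrite /tie_payoff indicE in_set1.
case: eqP => _ /=; last by rewrite mulr0 addr0.
by rewrite mulr1; case: ifP => _; [|case: ifP => _]; rewrite ?addr0; field.
Qed.

Lemma measurable_bid_util : measurable_fun setT bid_util.
Proof.
have mbelow : measurable_fun setT (mass_below Q).
  exact: nondecreasing_measurable (mass_below_nd Q).
have mabove : measurable_fun setT (mass_above Q).
  exact: nonincreasing_measurable (mass_above_ni Q).
have mtie : measurable_fun setT tie_payoff.
  rewrite tie_payoffE; apply: measurable_funD; first exact: measurable_funB.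
  by apply: measurable_funM => //; exact: measurable_indic.
have -> : bid_util = (fun x => (v - x) * mass_below Q x - x * mass_above Q x +
    tie_payoff x * (1 - mass_below Q x - mass_above Q x)).
  by apply/funext => x; rewrite /bid_util pr_set1.
apply: measurable_funD; first apply: measurable_funB.
- by apply: measurable_funM => //; exact: measurable_funB.
- exact: measurable_funM.
- by apply: measurable_funM => //; do 2 apply: measurable_funB => //.
Qed.

Hypothesis v_ge0 : 0 <= v.

Let tie_payoff_bounds x : - x <= tie_payoff x <= v - x.
Proof.
have := v_ge0; rewrite /tie_payoff.
by case: ifP => _; [|case: ifP => _]; move=> v0; apply/andP; split; lra.
Qed.

Lemma bid_util_ge x : v * mass_below Q x - x <= bid_util x.
Proof.
have /andP[tie_ge _] := tie_payoff_bounds x.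
have : - x * pr Q [set x] <= tie_payoff x * pr Q [set x].
  by rewrite ler_wpM2r ?pr_ge0.
by rewrite /bid_util pr_set1; lra.
Qed.

Lemma bid_util_le x : bid_util x <= v * pr Q `]-oo, x] - x.
Proof.
have /andP[_ tie_le] := tie_payoff_bounds x.
have : tie_payoff x * pr Q [set x] <= (v - x) * pr Q [set x].
  by rewrite ler_wpM2r ?pr_ge0.
by rewrite /bid_util pr_itvNyc pr_set1; lra.
Qed.

Lemma bid_util_le_sub x : bid_util x <= v - x.
Proof.
apply: (le_trans (bid_util_le x)); rewrite lerD2r ler_piMr //.
by rewrite pr_itvNyc gerBl pr_ge0.
Qed.

Lemma bid_utilE_neqL x : x != Lval B B' v v' ->
  bid_util x = v * mass_below Q x + v / 2 * pr Q [set x] - x.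
Proof.
by move=> /negbTE xL; rewrite /bid_util /tie_payoff xL /= !pr_set1; ring.
Qed.

Lemma exp_utilE (G : probability R R) :
  exp_util B v B' v' G Q = (\int[G]_x (bid_util x)%:E)%E.
Proof. by apply: eq_integral => x _; rewrite integral_payoff. Qed.

Lemma integrable_bid_util (G : probability R R) :
  G.-integrable `[0, B] (fun x => (bid_util x)%:E).
Proof.
apply: (@le_integrable _ _ _ G _ (measurable_itv _) _ (fun=> (v + B)%:E)).
- apply/measurable_EFinP; exact: measurable_funS measurable_bid_util.
- move=> x /=; rewrite in_itv /= => /andP[x_ge0 xB].
  have := bid_util_ge x; have := bid_util_le_sub x; have := v_ge0.
  have : 0 <= v * mass_below Q x by rewrite mulr_ge0 ?pr_ge0.
  move=> ? v0 ? ?; have vB : 0 <= v + B by lra.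
  by rewrite lee_fin (ger0_norm vB) ler_norml; apply/andP; split; lra.
- exact: finite_measure_integrable_cst.
Qed.

Lemma exp_util_mixed (G : probability R R) : mixed_on B G ->
  exp_util B v B' v' G Q = (\int[G]_(x in `[0%R, B]%classic) (bid_util x)%:E)%E.
Proof.
move=> GB; rewrite exp_utilE [RHS]integral_mkcond; apply: ae_eq_integral => //.
- by apply/measurable_EFinP; exact: measurable_bid_util.
- apply/measurable_restrict => //; rewrite setTI.
  by apply/measurable_EFinP; apply: measurable_funS measurable_bid_util.
- exists (~` `[0, B]%classic); split => //; first exact: measurableC.
    by have := probability_setC G (measurable_itv `[0, B]); rewrite GB subee.
  move=> y /= /not_implyP[_]; apply: contra_not => yB.
  by rewrite patchE mem_set.
Qed.

End bid_utility.

Lemma Lval_le {R : realType} (B B' v v' : R) :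
  [/\ Lval B B' v v' <= B, Lval B B' v v' <= B', Lval B B' v v' <= v &
      Lval B B' v v' <= v'].
Proof. by rewrite /Lval; split; rewrite !ge_min lexx ?orbT. Qed.

Lemma LvalC {R : realType} (B B' v v' : R) : Lval B' B v' v = Lval B B' v v'.
Proof. by rewrite /Lval [Num.min B' B]minC [Num.min v' v]minC. Qed.

Definition best_response {R : realType} (B v B' v' : R)
    (F Q : probability R R) : Prop :=
  forall G : probability R R, mixed_on B G ->
    (exp_util B v B' v' G Q <= exp_util B v B' v' F Q)%E.

Definition value {R : realType} (B v B' v' : R) (F Q : probability R R) : R :=
  fine (exp_util B v B' v' F Q).

Section best_response.
Context {R : realType} {B v B' v' : R} {F Q : probability R R}.
Hypotheses (v_gt0 : 0 < v) (B_ge0 : 0 <= B) (FB : mixed_on B F).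
Hypothesis F_best : best_response B v B' v' F Q.

Local Notation U := (value B v B' v' F Q).
Local Notation bid_util := (bid_util B v B' v' Q).

Let v_ge0 : 0 <= v := ltW v_gt0.
Let util_ge := bid_util_ge B v B' v' Q v_ge0.
Let util_le := bid_util_le B v B' v' Q v_ge0.
Let util_le_sub := bid_util_le_sub B v B' v' Q v_ge0.

Lemma exp_util_value : exp_util B v B' v' F Q = U%:E.
Proof.
rewrite fineK // exp_util_mixed //.
by apply: integrable_fin_num => //; exact: integrable_bid_util.
Qed.

Lemma bid_util_le_value x : 0 <= x <= B -> bid_util x <= U.
Proof.
move=> xB; have dirac_mixed : mixed_on B (\d_x : probability R R).
  by rewrite /mixed_on -[LHS]/(\d_x `[0, B]) diracE mem_set //= in_itv.
have := F_best _ dirac_mixed.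
rewrite exp_util_value exp_utilE integral_dirac //.
  by rewrite diracT mul1e lee_fin.
by apply/measurable_EFinP; exact: measurable_bid_util.
Qed.

Lemma value_ge0 : 0 <= U.
Proof.
have zero_bid : (0 : R) <= 0 <= B by rewrite lexx B_ge0.
apply: le_trans (bid_util_le_value 0 zero_bid).
have := util_ge 0; rewrite subr0; apply: le_trans.
by rewrite mulr_ge0 ?pr_ge0.
Qed.

Lemma pr_suboptimal_eq0 (A : set R) (c : R) : measurable A ->
  (forall x, A x -> 0 <= x <= B -> bid_util x <= c) -> c < U -> pr F A = 0.
Proof.
move=> mA Ac cU; set K := `[0, B]%classic.
have mK : measurable K by exact: measurable_itv.
have mAK : measurable (A `&` K) by exact: measurableI.
(* On [0, B] the integrand is at most c on A and at most U elsewhere. *)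
have : (U%:E <= \int[F]_(x in K) (U + (c - U) * \1_(A `&` K) x)%:E)%E.
  rewrite -exp_util_value exp_util_mixed //; apply: le_integral => //.
  - exact: integrable_bid_util.
  - apply: (@integrableD _ _ _ F _ mK (cst U%:E)
      (fun x => ((c - U) * \1_(A `&` K) x)%:E)).
      exact: finite_measure_integrable_cst.
    exact: integrable_indicZ.
  move=> x; rewrite inE /= in_itv /= => Kx; rewrite lee_fin indicE.
  have [/set_mem[Ax _]|_] := boolP (x \in A `&` K).
    by rewrite mulr1 subrKC; exact: Ac.
  by rewrite mulr0 addr0; exact: bid_util_le_value.
under eq_integral do rewrite EFinD.
rewrite integralD //; last 2 first.
- exact: finite_measure_integrable_cst.
- exact: integrable_indicZ.
rewrite integral_cst // integral_indicZ // setIidl; last exact: subIsetr.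
rewrite [X in (_ * X)%E](_ : _ = 1%E) ?mule1; last exact: FB.
rewrite -EFinD lee_fin -(pr_setI_mixed FB _ mA) -/K => Upr.
apply/le_anti; rewrite pr_ge0 andbT; have := pr_ge0 F (A `&` K); nra.
Qed.

Lemma pr_set1_eq0_of_opponent_atom s :
  0 <= s < Lval B B' v v' -> 0 < pr Q [set s] -> pr F [set s] = 0.
Proof.
(* Since s <> L the tie at s is split evenly; bidding s + e instead wins the
   whole atom q for an extra cost e <= v q / 4. *)
case/andP=> s_ge0 sL q_gt0; have [LB _ _ _] := Lval_le B B' v v'.
set q := pr Q [set s] in q_gt0 *.
set e := Num.min (v * q / 4) ((Lval B B' v v' - s) / 2).
have vq_gt0 : 0 < v * q by exact: mulr_gt0.
have e_gt0 : 0 < e by rewrite lt_min; apply/andP; split; lra.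
have [e_vq e_L] : e <= v * q / 4 /\ e <= (Lval B B' v v' - s) / 2.
  by split; rewrite ge_min lexx ?orbT.
have se_bid : 0 <= s + e <= B by apply/andP; split; lra.
have below_se : mass_below Q s + q <= mass_below Q (s + e).
  have -> : mass_below Q s + q = pr Q `]-oo, s].
    by rewrite /q pr_set1 pr_itvNyc; lra.
  by apply: pr_le => // y /=; rewrite !in_itv /= => /le_lt_trans; apply; lra.
have := ler_wpM2l v_ge0 below_se; have := bid_util_le_value _ se_bid.
have := util_ge (s + e); move=> util_se se_value v_below.
apply: (pr_suboptimal_eq0 _ (bid_util s)) => [|x /= -> //|].
  exact: measurable_set1.
by rewrite bid_utilE_neqL ?lt_eqF // -/q; lra.
Qed.

Hypothesis QB' : mixed_on B' Q.

Lemma value_ge_sure_win m : upper_end Q < m <= B -> v - m <= U.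
Proof.
case/andP=> Qm mB; have /andP[Q_ge0 _] := upper_end_itv QB'.
have below1 : mass_below Q m = 1.
  by have := pr_itvcy_gt_upper_end QB' _ Qm; rewrite pr_itvcy; lra.
have m_bid : 0 <= m <= B by apply/andP; split => //; lra.
apply: le_trans (bid_util_le_value m m_bid).
by have := util_ge m; rewrite below1 mulr1.
Qed.

Lemma upper_end_le_of_value m : v - m <= U -> upper_end F <= m.
Proof.
move=> mU; rewrite leNgt; apply/negP => m_lt.
set m' := (m + upper_end F) / 2.
have m'_lt : m' < upper_end F by rewrite /m'; lra.
have := mass_above_lt_upper_end FB _ m'_lt.
rewrite /mass_above (pr_suboptimal_eq0 _ (v - m')) ?ltxx //; last first.
  by rewrite /m'; lra.
by move=> x /=; rewrite in_itv /= andbT => m'x _; have := util_le_sub x; lra.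
Qed.

Lemma upper_end_le_valuation : upper_end F <= v.
Proof. by apply: upper_end_le_of_value; rewrite subrr value_ge0. Qed.

Lemma upper_end_le_opponent : upper_end F <= upper_end Q.
Proof.
rewrite leNgt; apply/negP => QF; have /andP[_ FB'] := upper_end_itv FB.
set m := (upper_end Q + upper_end F) / 2.
have m_win : upper_end Q < m <= B by rewrite /m; apply/andP; split; lra.
have := upper_end_le_of_value m (value_ge_sure_win m m_win).
by rewrite /m; lra.
Qed.

Lemma value_gt0 : upper_end Q < Lval B B' v v' -> 0 < U.
Proof.
move=> QL; have [LB _ Lv _] := Lval_le B B' v v'.
set m := (upper_end Q + Lval B B' v v') / 2.
have m_win : upper_end Q < m <= B by rewrite /m; apply/andP; split; lra.
by have := value_ge_sure_win m m_win; rewrite /m; lra.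
Qed.

Lemma value_le_mass_below b : 0 < mass_below F b -> U <= v * mass_below Q b.
Proof.
move=> Fb; rewrite leNgt; apply/negP => bU.
suff : mass_below F b = 0 by move: Fb => /[swap] ->; rewrite ltxx.
apply: (pr_suboptimal_eq0 _ _ _ _ bU) => // x /=.
rewrite in_itv /= => xb /andP[x_ge0 _].
have : pr Q `]-oo, x] <= mass_below Q b.
  by apply: pr_le => // y /=; rewrite !in_itv /= => /le_lt_trans; apply.
move=> /(ler_wpM2l v_ge0); have := util_le x; lra.
Qed.

Lemma value_le_pr_itvNyc s :
  (forall b, s < b -> 0 < mass_below F b) -> U <= v * pr Q `]-oo, s].
Proof.
move=> Fs; rewrite pr_itvNyc mulrC -ler_pdivrMr //.
suff : mass_above Q s <= 1 - U / v by lra.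
apply: mass_above_le => b sb.
rewrite pr_itvcy lerD2l lerN2 ler_pdivrMr // mulrC.
exact: value_le_mass_below (Fs b sb).
Qed.

Lemma mass_below_eq0_of_opponent a :
  0 < U -> mass_below Q a = 0 -> mass_below F a = 0.
Proof.
move=> U_gt0 Qa; apply/le_anti; rewrite pr_ge0 andbT leNgt; apply/negP.
by move=> /value_le_mass_below; rewrite Qa mulr0 leNgt U_gt0.
Qed.

Lemma pr_set1_lower_end_gt0 :
  0 < U -> lower_end Q = lower_end F -> 0 < pr Q [set lower_end F].
Proof.
move=> U_gt0 QF; have Q_below : mass_below Q (lower_end F) = 0.
  by rewrite -QF (mass_below_lower_end QB').
have : 0 < v * pr Q `]-oo, lower_end F].
  exact: lt_le_trans U_gt0 (value_le_pr_itvNyc _ (mass_below_gt_lower_end FB)).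
by rewrite pmulr_rgt0 // pr_itvNyc pr_set1 Q_below subr0.
Qed.

End best_response.

Theorem lemma2 (R : realType) (B1 B2 v1 v2 : R)
  (hB1 : 0 <= B1) (hB2 : 0 <= B2) (hv1 : 0 < v1) (hv2 : 0 < v2)
  (F1 F2 : probability R R) :
  nash_eq B1 B2 v1 v2 F1 F2 ->
  sup (supp F1) = Lval B1 B2 v1 v2 /\ sup (supp F2) = Lval B1 B2 v1 v2.
Proof.
case=> F1B F2B best1 best2; rewrite (sup_supp F1B) (sup_supp F2B).
have t_eq : upper_end F1 = upper_end F2.
  apply/le_anti; rewrite (upper_end_le_opponent hv1 F1B best1 F2B).
  by rewrite (upper_end_le_opponent hv2 F2B best2 F1B).
rewrite -t_eq; set L := Lval B1 B2 v1 v2.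
have t_le : upper_end F1 <= L.
  have /andP[_ tB1] := upper_end_itv F1B.
  have /andP[_ tB2] := upper_end_itv F2B.
  have tv1 := upper_end_le_valuation hv1 hB1 F1B best1.
  have tv2 := upper_end_le_valuation hv2 hB2 F2B best2.
  by rewrite -t_eq in tB2 tv2; rewrite /L /Lval !le_min tB1 tB2 tv1 tv2.
suff t_ge : L <= upper_end F1 by split; apply/le_anti; rewrite t_le t_ge.
rewrite leNgt; apply/negP => t_lt.
have U1 : 0 < value B1 v1 B2 v2 F1 F2.
  by apply: value_gt0 hv1 F1B best1 F2B _; rewrite -t_eq.
have U2 : 0 < value B2 v2 B1 v1 F2 F1.
  by apply: value_gt0 hv2 F2B best2 F1B _; rewrite LvalC.
have s_eq : lower_end F2 = lower_end F1.
  rewrite /lower_end; congr sup; apply/seteqP; split => a /=.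
    exact: mass_below_eq0_of_opponent hv1 F1B best1 a U1.
  exact: mass_below_eq0_of_opponent hv2 F2B best2 a U2.
have atom2 := pr_set1_lower_end_gt0 hv1 F1B best1 F2B U1 s_eq.
have atom1 := pr_set1_lower_end_gt0 hv2 F2B best2 F1B U2 (esym s_eq).
rewrite s_eq in atom1; set s := lower_end F1 in atom1 atom2.
have s_bid : 0 <= s < L.
  by rewrite (lower_end_ge0 F1B) (le_lt_trans (lower_end_le_upper_end F1B)).
have := pr_set1_eq0_of_opponent_atom hv1 F1B best1 s s_bid atom2.
by move: atom1 => /[swap] ->; rewrite ltxx.
Qed.
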